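(* Let $\langle W,\mathcal{N},V\rangle$ be an nIML1-F1-model. For every formula $\varphi$ and every $w\in W$: if $w\Vdash\nabla\varphi$, then $u\Vdash\nabla\varphi$ for every $u\in\bigcap\mathcal{N}_w$.
   Context: Formulas are built from a denumerable set $PV$ of propositional variables and $\bot$ using binary $\land,\lor,\rightarrow$ and unary $\Delta,\nabla$. An nIML1-model is a triple $\langle W,\mathcal{N},V\rangle$ with $W\neq\emptyset$, $\mathcal{N}:W\to P(P(W))$ satisfying for all $w$: (a) $w\in\bigcap\mathcal{N}_w$; (b) $\bigcap\mathcal{N}_w\in\mathcal{N}_w$; (c) $u\in\bigcap\mathcal{N}_w\Rightarrow\bigcap\mathcal{N}_u\subseteq\bigcap\mathcal{N}_w$; (d) $\bigcap\mathcal{N}_w\subseteq X\subseteq\bigcup\mathcal{N}_w\Rightarrow X\in\mathcal{N}_w$; (e) $u\in\bigcap\mathcal{N}_w\Rightarrow\bigcup\mathcal{N}_u\subseteq\bigcup\mathcal{N}_w$ ($\bigcap\mathcal{N}_w$, $\bigcup\mathcal{N}_w$ the intersection and union of the family $\mathcal{N}_w$), and $V:PV\to P(W)$ with $w\in V(q)\Rightarrow\bigcap\mathcal{N}_w\subseteq V(q)$. It is an nIML1-F1-model if moreover (F1): whenever $u\in\bigcap\mathcal{N}_w$ and $v\in\bigcup\mathcal{N}_w$, there is $z\in W$ with $z\in\bigcup\mathcal{N}_u$ and $z\in\bigcap\mathcal{N}_v$. Forcing: atoms via $V$; $\bot$ never; $\land,\lor$ pointwise; $w\Vdash\varphi\rightarrow\psi$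 iff every $v\in\bigcap\mathcal{N}_w$ has $v\nVdash\varphi$ or $v\Vdash\psi$; $w\Vdash\Delta\varphi$ iff every $v\in\bigcup\mathcal{N}_w$ has $v\Vdash\varphi$; $w\Vdash\nabla\varphi$ iff some $v\in\bigcup\mathcal{N}_w$ has $v\Vdash\varphi$. *)

Set Implicit Arguments.

Inductive form : Type :=
| Var : nat -> form
| Bot : form
| And : form -> form -> form
| Or : form -> form -> form
| Imp : form -> form -> form
| Delta : form -> form
| Nabla : form -> form.

Section Models.
Variable W : Type.
Definition nbhd := W -> (W -> Prop) -> Prop.

Definition bigcapN (N : nbhd) (w : W) : W -> Prop :=
  fun v => forall X, N w X -> X v.
Definition bigcupN (N : nbhd) (w : W) : W -> Prop :=
  fun v => exists X, N w X /\ X v.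

Definition subset (A B : W -> Prop) := forall x, A x -> B x.

Record nIML1_frame (N : nbhd) : Prop := {
  cond_a : forall w, bigcapN N w w;
  cond_b : forall w, N w (bigcapN N w);
  cond_c : forall w u, bigcapN N w u -> subset (bigcapN N u) (bigcapN N w);
  cond_d : forall w (X : W -> Prop),
      subset (bigcapN N w) X -> subset X (bigcupN N w) -> N w X;
  cond_e : forall w u, bigcapN N w u -> subset (bigcupN N u) (bigcupN N w)
}.

Definition persistent_val (N : nbhd) (V : nat -> W -> Prop) : Prop :=
  forall q w, V q w -> subset (bigcapN N w) (V q).

Definition nIML1_model (N : nbhd) (V : nat -> W -> Prop) : Prop :=
  nIML1_frame N /\ persistent_val N V.

Definition cond_F1 (N : nbhd) : Prop :=
  forall w u v, bigcapN N w u -> bigcupN N w v ->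
    exists z, bigcupN N u z /\ bigcapN N v z.

Definition nIML1_F1_model (N : nbhd) (V : nat -> W -> Prop) : Prop :=
  nIML1_model N V /\ cond_F1 N.

Fixpoint forces (N : nbhd) (V : nat -> W -> Prop) (w : W) (phi : form) : Prop :=
  match phi with
  | Var q => V q w
  | Bot => False
  | And a b => forces N V w a /\ forces N V w b
  | Or a b => forces N V w a \/ forces N V w b
  | Imp a b => forall v, bigcapN N w v -> (~ forces N V v a \/ forces N V v b)
  | Delta a => forall v, bigcupN N w v -> forces N V v a
  | Nabla a => exists v, bigcupN N w v /\ forces N V v a
  end.
End Models.


(* Forcing is persistent along the order u ∈ ⋂N_w: atoms by the persistence of V,
   implications by (c), Δ by (e), and ∇ by (F1) — a witness v ∈ ⋃N_w for ∇φ at w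
   yields z ∈ ⋃N_u with z ∈ ⋂N_v, and φ persists from v to z.  The theorem is the
   ∇-case of this induction. *)

Section Persistence.

Context {W : Type} {N : nbhd W} {V : nat -> W -> Prop}.

Definition persistent_form (phi : form) : Prop :=
  forall v, forces N V v phi -> forall z, bigcapN N v z -> forces N V z phi.

Lemma forces_Nabla_bigcap (F1 : cond_F1 N) (phi : form) :
  persistent_form phi -> persistent_form (Nabla phi).
Proof.
  intros Hphi w [v [Hv Hfv]] u Hu.
  destruct (F1 w u v Hu Hv) as [z [Hz Hvz]].
  exists z; split; [exact Hz | exact (Hphi v Hfv z Hvz)].
Qed.

Lemma forces_bigcap (M : nIML1_model N V) (F1 : cond_F1 N) (phi : form) :
  persistent_form phi.
Proof.
  destruct M as [F P].
  induction phi as [q | | a IHa b IHb | a IHa b IHb | a _ b _ | a _ | a IHa];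
    try (intros v Hv z Hz; simpl in *).
  - exact (P q v Hv z Hz).
  - exact Hv.
  - destruct Hv as [Ha Hb]; split; [exact (IHa v Ha z Hz) | exact (IHb v Hb z Hz)].
  - destruct Hv as [Ha | Hb]; [left; exact (IHa v Ha z Hz) | right; exact (IHb v Hb z Hz)].
  - intros y Hy; exact (Hv y (cond_c F Hz Hy)).
  - intros y Hy; exact (Hv y (cond_e F Hz Hy)).
  - exact (forces_Nabla_bigcap F1 a IHa v Hv z Hz).
Qed.

End Persistence.

Theorem lemma9p1 (W : Type) (N : nbhd W) (V : nat -> W -> Prop) :
  (exists w0 : W, True) ->
  nIML1_F1_model N V ->
  forall (phi : form) (w : W),
    forces N V w (Nabla phi) ->
    forall u, bigcapN N w u -> forces N V u (Nabla phi).
Proof.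
  intros _ [M F1] phi.
  exact (forces_Nabla_bigcap F1 phi (forces_bigcap M F1 phi)).
Qed.
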